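(* Fix an integer $k \ge 2$, a graphlet $\mathsf{G} = (\mathsf{V},\mathsf{E})$ with $\mathsf{V} = \{u_1,\dots,u_k\}$, and a privacy budget $\epsilon > 0$. Let $\tilde{\mathsf{G}}(G)$ be the output of Algorithm 1 (described in the context) on an input graph $G$ with $n$ nodes. Then the expected $\ell_2$-error of $\tilde{\mathsf{G}}(G)$ as an estimator of $\mathsf{G}(G)$ is $O(n^{k-1})$; that is, there is a constant $C$ (depending only on $k$, $\mathsf{G}$ and $\epsilon$) such that for every $n$ and every simple undirected graph $G$ on $n$ nodes, $$\sqrt{\mathbb{E}\big[(\tilde{\mathsf{G}}(G) - \mathsf{G}(G))^2\big]} \le C\, n^{k-1}.$$
   Context: Let $G=(V,E)$ be a simple undirected graph with $V=\{v_1,\dots,v_n\}$; user $v_i$ holds its adjacency vector $a_i=(a_{i,1},\dots,a_{i,n})$ with $a_{i,j}=1$ iff $\{v_i,v_j\}\in E$. A graphlet is a simple graph $\mathsf{G}=(\mathsf{V},\mathsf{E})$ with $\mathsf{V}=\{u_1,\dots,u_k\}$; $\mathsf{G}(G)$ denotes the number of distinct subgraphs $(V',E')$ of $G$ (not necessarily induced) isomorphic to $\mathsf{G}$. $A(\mathsf{G})$ is the number of automorphisms of $\mathsf{G}$ (bijections $\pi:\mathsf{V}\to\mathsf{V}$ with $\{\pi(u_i),\pi(u_j)\}\in\mathsf{E}$ iff $\{u_i,u_j\}\in\mathsf{E}$). Algorithm 1: (1) Randomized response: every user $v_i$ reports, independently for each $j\ne i$ (and independently across users), a bit $\tilde a_{i,j}$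 with $\Pr[\tilde a_{i,j}=1]=e^{\epsilon}/(1+e^{\epsilon})$ if $a_{i,j}=1$ and $=1/(1+e^{\epsilon})$ if $a_{i,j}=0$. (2) The server computes $\hat a_{i,j} = \frac{e^{\epsilon}+1}{e^{\epsilon}-1}\tilde a_{i,j} - \frac{1}{e^{\epsilon}-1}$. (3) Let $\mathcal{D}$ be the set of tuples $\mathcal{W}=(v_{\ell_1},\dots,v_{\ell_k})\in V^k$ of pairwise distinct nodes; for each such tuple set $\tilde W(\mathcal{W},\mathsf{G}) = \prod_{\{u_i,u_j\}\in\mathsf{E},\, i<j} \hat a_{\ell_i,\ell_j}$. (4) Output $\tilde{\mathsf{G}}(G) = \big(\sum_{\mathcal{W}\in\mathcal{D}} \tilde W(\mathcal{W},\mathsf{G})\big)/A(\mathsf{G})$. *)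

From HB Require Import structures.
From mathcomp Require Import all_boot all_order all_algebra all_fingroup.
From mathcomp Require Import reals sequences.
Set Implicit Arguments. Unset Strict Implicit. Unset Printing Implicit Defensive.
Import Order.TTheory GRing.Theory Num.Theory.
Local Open Scope ring_scope.

Definition simple_graph (n : nat) (a : rel 'I_n) : Prop :=
  symmetric a /\ irreflexive a.

Definition is_subgraph (n : nat) (a : rel 'I_n)
    (p : {set 'I_n} * {set {set 'I_n}}) : bool :=
  [forall e in p.2, [exists x, exists y,
     [&& x != y, e == [set x; y], a x y, x \in p.1 & y \in p.1]]].

Definition iso_to_graphlet (k n : nat) (g : rel 'I_k)
    (p : {set 'I_n} * {set {set 'I_n}}) : bool :=
  [exists f : {ffun 'I_k -> 'I_n},
     [&& injectiveb f, f @: setT == p.1 &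
         [forall i, forall j, ([set f i; f j] \in p.2) == g i j]]].

Definition graphlet_count (k n : nat) (g : rel 'I_k) (a : rel 'I_n) : nat :=
  #|[set p : {set 'I_n} * {set {set 'I_n}} |
      is_subgraph a p && iso_to_graphlet g p]|.

Definition num_aut (k : nat) (g : rel 'I_k) : nat :=
  #|[set s : {perm 'I_k} | [forall i, forall j, g (s i) (s j) == g i j]]|.

Section Alg.
Variable R : realType.

Definition rr_prob (eps : R) (x b : bool) : R :=
  let p1 := if x then expR eps / (1 + expR eps) else 1 / (1 + expR eps) in
  if b then p1 else 1 - p1.

(* An outcome of step (1): the reported bits w (i,j) = tilde a_{i,j};
   diagonal bits are not reported and are fixed to false. Its probability
   (independent bits over all ordered pairs i <> j). *)
Definition outcome_prob (eps : R) (n : nat) (a : rel 'I_n)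
    (w : {ffun 'I_n * 'I_n -> bool}) : R :=
  (\prod_(ij : 'I_n * 'I_n | ij.1 != ij.2) rr_prob eps (a ij.1 ij.2) (w ij)) *
  \prod_(i : 'I_n) (~~ w (i, i))%:R.

Definition hat_a (eps : R) (n : nat) (w : {ffun 'I_n * 'I_n -> bool})
    (i j : 'I_n) : R :=
  (expR eps + 1) / (expR eps - 1) * (w (i, j))%:R - 1 / (expR eps - 1).

Definition estimator (eps : R) (k n : nat) (g : rel 'I_k)
    (w : {ffun 'I_n * 'I_n -> bool}) : R :=
  (\sum_(W : {ffun 'I_k -> 'I_n} | injectiveb W)
     \prod_(ij : 'I_k * 'I_k | (ij.1 < ij.2)%N && g ij.1 ij.2)
        hat_a eps w (W ij.1) (W ij.2)) / (num_aut g)%:R.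

Definition mse (eps : R) (k n : nat) (g : rel 'I_k) (a : rel 'I_n) : R :=
  \sum_(w : {ffun 'I_n * 'I_n -> bool})
     outcome_prob eps a w * (estimator eps g w - (graphlet_count g a)%:R) ^+ 2.

End Alg.

(* Call an injective map W from the graphlet's vertices to V an embedding when
   it sends every graphlet edge onto an edge of G.  Embeddings with the same
   image copy differ by an automorphism of the graphlet, so G(G) is the sum over
   injective W of the product mu_W of the true edge indicators, divided by A(G);
   the estimator is the same sum with every indicator replaced by its debiased
   randomized-response bit, which is unbiased.

   The error is thus (1/A) sum_W (X_W - mu_W), whose mean square is
   (1/A^2) sum_(W,W') Cov(X_W, X_W').  The bits read by X_W sit at distinct
   ordered pairs (W u_i, W u_j), and distinct ordered pairs are reported
   independently, so the covariance vanishes unless W and W' read a common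
   ordered pair, and it is bounded by a constant depending only on eps and the
   graphlet.  Pinning the images of two graphlet vertices leaves n^(k-2) maps,
   so at most |E|^2 n^(k-2) maps W' overlap a given W, and the mean square error
   is O(n^k n^(k-2)) = O(n^(2(k-1))). *)

From HB Require Import structures.
From mathcomp Require Import all_boot all_order all_algebra all_fingroup.
From mathcomp Require Import reals sequences exp.
From mathcomp Require Import ring lra zify.
Set Implicit Arguments. Unset Strict Implicit. Unset Printing Implicit Defensive.
Import Order.TTheory GRing.Theory Num.Theory.

Lemma set2_inj (T : finType) (x y x' y' : T) :
  [set x; y] = [set x'; y'] -> (x = x' /\ y = y') \/ (x = y' /\ y = x').
Proof.
move=> /setP E; have := E x; have := E y; have := E x'; have := E y'.
rewrite !inE !eqxx ?orbT => hy' hx' /esym hy /esym hx.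
by case/orP: hx => /eqP ?; case/orP: hy => /eqP ?; case/orP: hx' => /eqP ?;
  case/orP: hy' => /eqP ?; subst; by [left | right].
Qed.

Lemma card_ffun_fix2 (aT rT : finType) (i j : aT) (x y : rT) : i != j ->
  #|[set f : {ffun aT -> rT} | (f i == x) && (f j == y)]| = #|rT| ^ (#|aT| - 2).
Proof.
move=> ij; pose F t := if t == i then pred1 x else if t == j then pred1 y else predT.
have -> : #|[set f : {ffun aT -> rT} | (f i == x) && (f j == y)]| =
    #|(family F : simpl_pred _)|.
  apply: eq_card => f; rewrite inE; apply/andP/familyP => [[fi fj] t | fF].
    by rewrite /F; case: eqP => [-> | _]; [|case: eqP => [-> |]].
  by have := fF i; have := fF j; rewrite /F eqxx eq_sym (negbTE ij) eqxx.
rewrite card_family foldrE big_map big_enum /= (bigD1 i) // (bigD1 j) 1?eq_sym //=.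
rewrite /F eqxx eq_sym (negbTE ij) eqxx !card1 !mul1n.
rewrite (eq_bigr (fun => #|rT|)) => [|t /andP [/negbTE -> /negbTE ->] //].
rewrite prod_nat_const -(cardC (pred2 i j)) card2 ij addKn.
by congr (_ ^ _); apply: eq_card => t; rewrite !inE negb_or.
Qed.

Section GraphletCopies.
Variables (k n : nat) (g : rel 'I_k) (a : rel 'I_n).

Definition is_embedding (f : {ffun 'I_k -> 'I_n}) : bool :=
  injectiveb f && [forall i, forall j, g i j ==> a (f i) (f j)].

Definition embedded_copy (f : {ffun 'I_k -> 'I_n}) :
    {set 'I_n} * {set {set 'I_n}} :=
  (f @: setT, [set [set f e.1; f e.2] | e in [set e : 'I_k * 'I_k | g e.1 e.2]]).

Definition graphlet_copies : {set {set 'I_n} * {set {set 'I_n}}} :=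
  [set p | is_subgraph a p && iso_to_graphlet g p].

Definition graphlet_auts : {set {perm 'I_k}} :=
  [set s : {perm 'I_k} | [forall i, forall j, g (s i) (s j) == g i j]].

Lemma graphlet_autsP (s : {perm 'I_k}) :
  reflect (forall i j, g (s i) (s j) = g i j) (s \in graphlet_auts).
Proof.
rewrite inE; apply: (iffP forallP) => [h i j | h i].
  by apply/eqP; move/forallP: (h i).
by apply/forallP => j; rewrite h.
Qed.

Lemma num_aut_gt0 : (0 < num_aut g)%N.
Proof. by apply/card_gt0P; exists 1%g; apply/graphlet_autsP => i j; rewrite !perm1. Qed.

Lemma mem_embedded_edges (f : {ffun 'I_k -> 'I_n}) i j :
  symmetric g -> injective f ->
  ([set f i; f j] \in (embedded_copy f).2) = g i j.
Proof.
move=> gsym injf; apply/imsetP/idP => [[e] | gij]; last by exists (i, j); rewrite ?inE.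
rewrite inE => ge /set2_inj [[/injf -> /injf ->] | [/injf -> /injf ->]] //.
by rewrite gsym.
Qed.

Lemma embedded_copy_in (f : {ffun 'I_k -> 'I_n}) :
  simple_graph g -> is_embedding f -> embedded_copy f \in graphlet_copies.
Proof.
case=> gsym girr /andP [injfb /forallP fhom]; have /injectiveP injf := injfb.
rewrite inE; apply/andP; split.
  apply/forallP => e0; apply/implyP => /imsetP [e]; rewrite inE => ge ->.
  apply/existsP; exists (f e.1); apply/existsP; exists (f e.2).
  have e12 : e.1 != e.2 by apply/eqP => e12; move: ge; rewrite e12 girr.
  have /forallP /(_ e.2) /implyP -> // := fhom e.1.
  by rewrite (inj_eq injf) e12 eqxx !imset_f.
apply/existsP; exists f; rewrite /= eqxx injfb /=.
by apply/forallP => i; apply/forallP => j; rewrite mem_embedded_edges.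
Qed.

Lemma graphlet_copy_embedded p : symmetric a -> p \in graphlet_copies ->
  exists2 f, is_embedding f & embedded_copy f = p.
Proof.
case: p => V E asym; rewrite inE => /andP [/forallP Esub /existsP [f]].
case/and3P => injfb /eqP /= fV /forallP fE; have /injectiveP injf := injfb.
have memE i j : ([set f i; f j] \in E) = g i j.
  by have /forallP /(_ j) /eqP := fE i.
have edgeP e : e \in E -> exists x y, [/\ e = [set x; y], a x y, x \in V & y \in V].
  move=> eE; have /existsP [x /existsP [y /and5P [_ /eqP -> axy xV yV]]] :=
    implyP (Esub e) eE.
  by exists x, y.
exists f.
  rewrite /is_embedding injfb; apply/forallP => i.
  apply/forallP => j; apply/implyP; rewrite -memE => /edgeP [x [y [exy axy _ _]]].
  by case/set2_inj: exy => [[-> ->] | [-> ->]]; rewrite // asym.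
rewrite /embedded_copy fV; congr pair; apply/setP => e; apply/imsetP/idP.
  by case=> x; rewrite inE => gx ->; rewrite memE.
move=> eE; have [x [y [exy _]]] := edgeP e eE.
rewrite -fV => /imsetP [i _ xi] /imsetP [j _ yj].
by exists (i, j); [rewrite inE /= -memE -xi -yj -exy | rewrite exy xi yj].
Qed.

Definition relabel (f : {ffun 'I_k -> 'I_n}) (s : {perm 'I_k}) :
  {ffun 'I_k -> 'I_n} := [ffun i => f (s i)].

Lemma relabel_embedding f s : s \in graphlet_auts ->
  is_embedding f -> is_embedding (relabel f s).
Proof.
move=> /graphlet_autsP sg /andP [/injectiveP injf /forallP fhom].
apply/andP; split.
  by apply/injectiveP => i j; rewrite !ffunE => /injf /perm_inj.
apply/forallP => i; apply/forallP => j; apply/implyP; rewrite -sg !ffunE => gij.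
by have /forallP /(_ (s j)) /implyP -> := fhom (s i).
Qed.

Lemma embedded_copy_relabel f s : s \in graphlet_auts ->
  embedded_copy (relabel f s) = embedded_copy f.
Proof.
move=> /graphlet_autsP sg; congr pair; apply/setP => x.
  apply/imsetP/imsetP => [[i _ ->] | [i _ ->]].
    by exists (s i); rewrite ?ffunE.
  by exists ((s^-1)%g i); rewrite ?ffunE ?permKV.
apply/imsetP/imsetP => [[e ge ->] | [e ge ->]].
  by exists (s e.1, s e.2); [move: ge; rewrite !inE /= sg | rewrite !ffunE].
exists ((s^-1)%g e.1, (s^-1)%g e.2); last by rewrite !ffunE !permKV.
by rewrite inE /= -sg !permKV; rewrite inE in ge.
Qed.

Lemma embedded_copy_eq_relabel (f0 f : {ffun 'I_k -> 'I_n}) : symmetric g ->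
  injective f0 -> injective f -> embedded_copy f = embedded_copy f0 ->
  exists2 s, s \in graphlet_auts & f = relabel f0 s.
Proof.
move=> gsym injf0 injf eqc; have [fV _] := eqc.
have /fin_all_exists [t tE] : forall i, exists j, f0 j = f i.
  move=> i; have : f i \in f0 @: setT by rewrite -fV imset_f.
  by case/imsetP => j _ ->; exists j.
have injt : injective t by move=> i j eqt; apply: injf; rewrite -!tE eqt.
exists (perm injt); last by apply/ffunP => i; rewrite ffunE permE tE.
apply/graphlet_autsP => i j; rewrite !permE.
by rewrite -(mem_embedded_edges _ _ gsym injf0) !tE -eqc mem_embedded_edges.
Qed.

Lemma card_embedded_copy_fiber f0 : symmetric g -> is_embedding f0 ->
  #|[set f | is_embedding f && (embedded_copy f == embedded_copy f0)]| =
  num_aut g.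
Proof.
move=> gsym f0emb; have /andP [/injectiveP injf0 _] := f0emb.
have relabel_inj : injective (relabel f0).
  by move=> s t /ffunP st; apply/permP => i; move: (st i); rewrite !ffunE => /injf0.
rewrite -[num_aut g]/#|graphlet_auts| -(card_imset _ relabel_inj); apply: eq_card => f.
apply/idP/imsetP => [| [s sg ->]].
  rewrite inE => /andP [femb /eqP ff0]; have /andP [/injectiveP injf _] := femb.
  exact: embedded_copy_eq_relabel.
by rewrite inE embedded_copy_relabel // eqxx andbT relabel_embedding.
Qed.

Lemma card_embeddings : simple_graph g -> symmetric a ->
  #|[set f | is_embedding f]| = num_aut g * graphlet_count g a.
Proof.
move=> gsimple asym; have [gsym _] := gsimple.
rewrite -sum1_card (partition_big_imset embedded_copy) /=.
have -> : embedded_copy @: [set f | is_embedding f] = graphlet_copies.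
  apply/setP => p; apply/imsetP/idP => [[f] | pG].
    by rewrite inE => femb ->; apply: embedded_copy_in.
  by have [f femb <-] := graphlet_copy_embedded asym pG; exists f; rewrite ?inE.
rewrite mulnC -sum_nat_const; apply: eq_bigr => p pG.
have [f0 f0emb <-] := graphlet_copy_embedded asym pG.
rewrite -(card_embedded_copy_fiber gsym f0emb) -sum1_card.
by apply: eq_bigl => f; rewrite !inE.
Qed.
End GraphletCopies.

Section Overlaps.
Variables (k n : nat) (g : rel 'I_k).

Definition graphlet_edges : {set 'I_k * 'I_k} :=
  [set e : 'I_k * 'I_k | (e.1 < e.2) && g e.1 e.2].

Definition edge_pairs (W : {ffun 'I_k -> 'I_n}) : {set 'I_n * 'I_n} :=
  [set (W e.1, W e.2) | e in graphlet_edges].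

Lemma graphlet_edge_neq e : e \in graphlet_edges -> e.1 != e.2.
Proof. by rewrite inE => /andP [lt_e _]; apply: contraTneq lt_e => ->; rewrite ltnn. Qed.

Lemma edge_pair_inj (W : {ffun 'I_k -> 'I_n}) :
  injective W -> injective (fun e : 'I_k * 'I_k => (W e.1, W e.2)).
Proof. by move=> injW [x1 x2] [y1 y2] [/injW -> /injW ->]. Qed.

Lemma edge_pairs_offdiag (W : {ffun 'I_k -> 'I_n}) :
  injective W -> {in edge_pairs W, forall ij, ij.1 != ij.2}.
Proof.
by move=> injW _ /imsetP [e /graphlet_edge_neq e12 ->] /=; rewrite (inj_eq injW).
Qed.

Lemma edge_pairs_overlap_le (W W' : {ffun 'I_k -> 'I_n}) :
  ~~ [disjoint edge_pairs W & edge_pairs W'] <=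
  \sum_(e in graphlet_edges) \sum_(e' in graphlet_edges)
    ((W' e'.1 == W e.1) && (W' e'.2 == W e.2)).
Proof.
case: pred0Pn => //= -[_ /andP [/imsetP [e ge ->] /imsetP [e' ge' [m1 m2]]]].
by rewrite (bigD1 e) //= (bigD1 e') //= m1 m2 !eqxx.
Qed.

Lemma sum_overlaps_le (W : {ffun 'I_k -> 'I_n}) :
  \sum_(W' : {ffun 'I_k -> 'I_n}) ~~ [disjoint edge_pairs W & edge_pairs W'] <=
  #|graphlet_edges| ^ 2 * n ^ (k - 2).
Proof.
have count_match e' x y : e' \in graphlet_edges ->
    \sum_(W' : {ffun 'I_k -> 'I_n}) ((W' e'.1 == x) && (W' e'.2 == y)) = n ^ (k - 2).
  move=> /graphlet_edge_neq e12.
  rewrite -[n in RHS]card_ord -[k in RHS]card_ord -(card_ffun_fix2 x y e12).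
  by rewrite -sum1dep_card [RHS]big_mkcond; apply: eq_bigr => W' _; case: (_ && _).
apply: (@leq_trans (\sum_(W' : {ffun 'I_k -> 'I_n}) \sum_(e in graphlet_edges)
    \sum_(e' in graphlet_edges) ((W' e'.1 == W e.1) && (W' e'.2 == W e.2)))).
  by apply: leq_sum => W' _; apply: edge_pairs_overlap_le.
rewrite exchange_big (eq_bigr (fun => #|graphlet_edges| * n ^ (k - 2))).
  by rewrite sum_nat_const mulnA mulnn.
move=> e _; rewrite exchange_big (eq_bigr _ (fun e' ge' => count_match e' _ _ ge')).
by rewrite sum_nat_const.
Qed.
End Overlaps.

Local Open Scope ring_scope.

Lemma sum_prod_ffun_indep (I T : finType) (R : comPzRingType)
    (rho f : I -> T -> R) (S : {set I}) :
  (forall i, i \notin S -> \sum_t rho i t = 1) ->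
  \sum_(w : {ffun I -> T}) (\prod_i rho i (w i)) * \prod_(i in S) f i (w i) =
  \prod_(i in S) \sum_t rho i t * f i t.
Proof.
move=> rho1; pose F i t := rho i t * (if i \in S then f i t else 1).
have FE (w : {ffun I -> T}) :
    (\prod_i rho i (w i)) * \prod_(i in S) f i (w i) = \prod_i F i (w i).
  by rewrite [\prod_(i in S) _]big_mkcond -big_split.
rewrite (eq_bigr _ (fun w _ => FE w)) -bigA_distr_bigA [RHS]big_mkcond.
apply: eq_bigr => i _.
case: ifP => iS; first by apply: eq_bigr => t _; rewrite /F iS.
by rewrite -(rho1 i) ?iS //; apply: eq_bigr => t _; rewrite /F iS mulr1.
Qed.

Lemma sum_weighted_centered_mul (T : finType) (R : comPzRingType)
    (p X Y : T -> R) (mX mY : R) :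
  \sum_t p t = 1 -> \sum_t p t * X t = mX -> \sum_t p t * Y t = mY ->
  \sum_t p t * ((X t - mX) * (Y t - mY)) = \sum_t p t * (X t * Y t) - mX * mY.
Proof.
move=> p1 pX pY.
have E t : p t * ((X t - mX) * (Y t - mY)) =
    p t * (X t * Y t) - mY * (p t * X t) - mX * (p t * Y t) + mX * mY * p t.
  by ring.
by rewrite (eq_bigr _ (fun t _ => E t)) big_split !sumrB -!mulr_sumr p1 pX pY /=;
  ring.
Qed.

Lemma weighted_sum_le (T : finType) (R : realDomainType) (p X : T -> R) (c : R) :
  (forall t, 0 <= p t) -> \sum_t p t = 1 -> (forall t, `|X t| <= c) ->
  \sum_t p t * X t <= c.
Proof.
move=> p0 p1 Xc; rewrite -[c]mul1r -p1 mulr_suml; apply: ler_sum => t _.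
by rewrite ler_wpM2l // (le_trans (ler_norm _) (Xc t)).
Qed.

Lemma prod_natr_bool (I : finType) (R : pzSemiRingType) (P B : pred I) :
  \prod_(i | P i) ((B i)%:R : R) = [forall (i | P i), B i]%:R.
Proof.
rewrite -big_andE; elim/big_rec2: _ => // i x b _ ->.
by case: (B i) => /=; rewrite ?mul1r ?mul0r.
Qed.

Section RandomizedResponse.
Variables (R : realType) (eps : R).

Definition rr_scale : R := (expR eps + 1) / (expR eps - 1).

Definition debias (b : bool) : R := rr_scale * b%:R - 1 / (expR eps - 1).

Lemma hat_aE n (w : {ffun 'I_n * 'I_n -> bool}) i j :
  hat_a eps w i j = debias (w (i, j)).
Proof. by []. Qed.

Lemma rr_prob_ge0 x b : 0 <= rr_prob eps x b.
Proof.
have e0 := expR_gt0 eps; have e1 : 0 < 1 + expR eps by lra.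
rewrite /rr_prob; case: x; case: b => /=; rewrite ?subr_ge0 ?ler_pdivrMr //;
  by [lra | rewrite divr_ge0 // ltW].
Qed.

Lemma rr_prob_sum x : \sum_b rr_prob eps x b = 1.
Proof. by rewrite big_bool /rr_prob /=; ring. Qed.

Lemma rr_debias_mean x : eps != 0 -> \sum_b rr_prob eps x b * debias b = x%:R.
Proof.
move=> eps0; have e1 : expR eps - 1 != 0.
  by rewrite subr_eq0 -(expR0 R) (inj_eq (@expR_inj R)).
have e2 : 1 + expR eps != 0 by rewrite gt_eqF // ltr_wpDl ?expR_gt0.
by rewrite big_bool /rr_prob /debias /rr_scale; case: x => /=; field; rewrite e1 e2.
Qed.

Lemma abs_debias_le b : 0 < eps -> `|debias b| <= rr_scale.
Proof.
move=> eps_gt0; have e1 : 0 < expR eps - 1 by rewrite subr_gt0 expR_gt1.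
rewrite /debias /rr_scale !mul1r; set q := (expR eps - 1)^-1.
have q0 : 0 < q by rewrite invr_gt0.
by rewrite ler_norml; case: b => /=; rewrite ?mulr1 ?mulr0; apply/andP; split; nra.
Qed.

Lemma rr_scale_ge1 : 0 < eps -> 1 <= rr_scale.
Proof.
move=> eps_gt0; have e1 : 0 < expR eps - 1 by rewrite subr_gt0 expR_gt1.
by rewrite /rr_scale ler_pdivlMr // mul1r; lra.
Qed.

End RandomizedResponse.

Section ReportedBits.
Variables (R : realType) (eps : R) (n : nat) (a : rel 'I_n).

Definition report_prob (ij : 'I_n * 'I_n) (b : bool) : R :=
  if ij.1 != ij.2 then rr_prob eps (a ij.1 ij.2) b else (~~ b)%:R.

Lemma outcome_probE w : outcome_prob eps a w = \prod_ij report_prob ij (w ij).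
Proof.
rewrite /outcome_prob [RHS](bigID (fun ij : 'I_n * 'I_n => ij.1 != ij.2)) /=.
congr (_ * _); first by apply: eq_bigr => ij ij_off; rewrite /report_prob ij_off.
rewrite (eq_bigr (fun i => \prod_(j | i == j) (~~ w (i, j))%:R)); last first.
  by move=> i _; rewrite (big_pred1 i) // => j; rewrite /= eq_sym.
rewrite pair_big_dep /=; apply: eq_big => [ij | [i j] /= ij_diag].
  by rewrite negbK.
by rewrite /report_prob /= ij_diag.
Qed.

Lemma report_prob_sum ij : \sum_b report_prob ij b = 1.
Proof.
rewrite /report_prob; case: (ij.1 != ij.2); first exact: rr_prob_sum.
by rewrite big_bool /= add0r.
Qed.

Lemma outcome_prob_ge0 w : 0 <= outcome_prob eps a w.
Proof.
rewrite outcome_probE; apply: prodr_ge0 => ij _; rewrite /report_prob.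
by case: ifP => _; [exact: rr_prob_ge0 | rewrite ler0n].
Qed.

Definition expect (X : {ffun 'I_n * 'I_n -> bool} -> R) : R :=
  \sum_w outcome_prob eps a w * X w.

Lemma expect_prod (f : 'I_n * 'I_n -> bool -> R) (S : {set 'I_n * 'I_n}) :
  expect (fun w => \prod_(ij in S) f ij (w ij)) =
  \prod_(ij in S) \sum_b report_prob ij b * f ij b.
Proof.
rewrite -sum_prod_ffun_indep => [|ij _]; last exact: report_prob_sum.
by apply: eq_bigr => w _; rewrite outcome_probE.
Qed.

Lemma outcome_prob_sum : \sum_w outcome_prob eps a w = 1.
Proof.
have := expect_prod (fun _ _ => 1) set0; rewrite /expect !big_set0 => <-.
by apply: eq_bigr => w _; rewrite mulr1.
Qed.

Lemma expect_prod_debias (S : {set 'I_n * 'I_n}) : eps != 0 ->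
  {in S, forall ij, ij.1 != ij.2} ->
  expect (fun w => \prod_(ij in S) debias eps (w ij)) =
  \prod_(ij in S) (a ij.1 ij.2)%:R.
Proof.
move=> eps0 S_off; rewrite (expect_prod (fun _ => debias eps)); apply: eq_bigr => ij ijS.
by rewrite /report_prob S_off // rr_debias_mean.
Qed.

End ReportedBits.

Section Estimator.
Variables (R : realType) (eps : R) (k n : nat) (g : rel 'I_k) (a : rel 'I_n).

Definition noisy_term (W : {ffun 'I_k -> 'I_n}) (w : {ffun 'I_n * 'I_n -> bool}) : R :=
  \prod_(e in graphlet_edges g) hat_a eps w (W e.1) (W e.2).

Definition exact_term (W : {ffun 'I_k -> 'I_n}) : R :=
  \prod_(e in graphlet_edges g) (a (W e.1) (W e.2))%:R.

Lemma prod_edge_pairs (F : 'I_n * 'I_n -> R) (W : {ffun 'I_k -> 'I_n}) :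
  injective W ->
  \prod_(e in graphlet_edges g) F (W e.1, W e.2) = \prod_(ij in edge_pairs g W) F ij.
Proof. by move=> injW; rewrite big_imset //; apply: in2W; apply: edge_pair_inj. Qed.

Lemma expect_noisy_term (W : {ffun 'I_k -> 'I_n}) : eps != 0 -> injective W ->
  expect eps a (noisy_term W) = exact_term W.
Proof.
move=> eps0 injW; rewrite /exact_term (prod_edge_pairs (fun ij => (a ij.1 ij.2)%:R) injW).
rewrite -(expect_prod_debias a eps0 (edge_pairs_offdiag injW)).
apply: eq_bigr => w _.
by rewrite /noisy_term (prod_edge_pairs (fun ij => debias eps (w ij))).
Qed.

Lemma expect_noisy_term_mul (W W' : {ffun 'I_k -> 'I_n}) :
  eps != 0 -> injective W -> injective W' ->
  [disjoint edge_pairs g W & edge_pairs g W'] ->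
  expect eps a (fun w => noisy_term W w * noisy_term W' w) =
  exact_term W * exact_term W'.
Proof.
move=> eps0 injW injW' disjWW'.
have offWW' : {in edge_pairs g W :|: edge_pairs g W', forall ij, ij.1 != ij.2}.
  by move=> ij /setUP [/(edge_pairs_offdiag injW) | /(edge_pairs_offdiag injW')].
have prodU (F : 'I_n * 'I_n -> R) :
    \prod_(ij in edge_pairs g W :|: edge_pairs g W') F ij =
    \prod_(ij in edge_pairs g W) F ij * \prod_(ij in edge_pairs g W') F ij.
  by rewrite -bigU //; apply: eq_bigl => ij; rewrite !inE.
rewrite /exact_term !(prod_edge_pairs (fun ij => (a ij.1 ij.2)%:R)) // -prodU.
rewrite -(expect_prod_debias a eps0 offWW'); apply: eq_bigr => w _.
by rewrite prodU /noisy_term !(prod_edge_pairs (fun ij => debias eps (w ij))).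
Qed.

Definition noisy_cov (W W' : {ffun 'I_k -> 'I_n}) : R :=
  expect eps a (fun w => (noisy_term W w - exact_term W) *
                         (noisy_term W' w - exact_term W')).

Lemma noisy_cov_disjoint (W W' : {ffun 'I_k -> 'I_n}) :
  eps != 0 -> injective W -> injective W' ->
  [disjoint edge_pairs g W & edge_pairs g W'] -> noisy_cov W W' = 0.
Proof.
move=> eps0 injW injW' disjWW'.
rewrite /noisy_cov /expect (sum_weighted_centered_mul (outcome_prob_sum eps a)
  (expect_noisy_term eps0 injW) (expect_noisy_term eps0 injW')).
have := expect_noisy_term_mul eps0 injW injW' disjWW'.
by rewrite /expect => ->; rewrite subrr.
Qed.

Lemma noisy_cov_le (W W' : {ffun 'I_k -> 'I_n}) : 0 < eps ->
  noisy_cov W W' <= (rr_scale eps ^+ #|graphlet_edges g| + 1) ^+ 2.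
Proof.
move=> eps_gt0; have scale_ge1 := rr_scale_ge1 eps_gt0.
have noisy_le V w : `|noisy_term V w| <= rr_scale eps ^+ #|graphlet_edges g|.
  rewrite normr_prod -prodr_const; apply: ler_prod => e _.
  by rewrite normr_ge0 hat_aE abs_debias_le.
have exact_le V : `|exact_term V| <= 1.
  rewrite normr_prod; apply: prodr_ile1 => e _.
  by rewrite normr_ge0 normr_nat lern1 leq_b1.
apply: weighted_sum_le => [w | | w]; first exact: outcome_prob_ge0.
  exact: outcome_prob_sum.
rewrite normrM expr2; apply: ler_pM => //; apply: (le_trans (ler_normB _ _));
  exact: lerD.
Qed.

Hypotheses (gsimple : simple_graph g) (asimple : simple_graph a).

Let A : R := (num_aut g)%:R.

Let A_gt0 : 0 < A. Proof. by rewrite ltr0n num_aut_gt0. Qed.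

Lemma exact_term_embedding (W : {ffun 'I_k -> 'I_n}) : injectiveb W ->
  exact_term W = (is_embedding g a W)%:R.
Proof.
have [gsym girr] := gsimple; have [asym _] := asimple.
move=> injW; rewrite /exact_term prod_natr_bool /is_embedding injW /=.
congr ((nat_of_bool _)%:R).
apply/forall_inP/forallP => [Wedge i | Whom [i j]].
  apply/forallP => j; apply/implyP => gij.
  case: (ltngtP i j) => [lt_ij | lt_ji | /val_inj eq_ij].
  - by apply: (Wedge (i, j)); rewrite inE lt_ij.
  - by rewrite asym; apply: (Wedge (j, i)); rewrite inE lt_ji gsym.
  - by move: gij; rewrite eq_ij girr.
by rewrite inE => /andP [_ gij]; have /forallP /(_ j) /implyP := Whom i; apply.
Qed.

Lemma graphlet_countE : (graphlet_count g a)%:R =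
  (\sum_(W : {ffun 'I_k -> 'I_n} | injectiveb W) exact_term W) / A.
Proof.
have -> : \sum_(W : {ffun 'I_k -> 'I_n} | injectiveb W) exact_term W =
    #|[set f | is_embedding g a f]|%:R.
  under eq_bigr => W injW do rewrite exact_term_embedding //.
  rewrite -sum1dep_card natr_sum big_mkcond [RHS]big_mkcond /=.
  apply: eq_bigr => W _; rewrite /is_embedding.
  by case: (injectiveb W) => //=; set b := [forall i, _]; case: b.
rewrite (card_embeddings gsimple) ?natrM; last by case: asimple.
by rewrite mulrAC divff ?mul1r // (lt0r_neq0 A_gt0).
Qed.

Lemma estimator_error w : estimator eps g w - (graphlet_count g a)%:R =
  (\sum_(W : {ffun 'I_k -> 'I_n} | injectiveb W) (noisy_term W w - exact_term W)) / A.
Proof.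
rewrite graphlet_countE sumrB mulrBl; congr (_ / _ - _).
by apply: eq_bigr => W _; apply: eq_bigl => e; rewrite inE.
Qed.

Lemma mseE : mse eps g a =
  (\sum_(W : {ffun 'I_k -> 'I_n} | injectiveb W)
     \sum_(W' : {ffun 'I_k -> 'I_n} | injectiveb W') noisy_cov W W') / A ^+ 2.
Proof.
pose D W w := noisy_term W w - exact_term W.
have sq w : outcome_prob eps a w * (estimator eps g w - (graphlet_count g a)%:R) ^+ 2 =
    \sum_(W : {ffun 'I_k -> 'I_n} | injectiveb W)
    \sum_(W' : {ffun 'I_k -> 'I_n} | injectiveb W')
      outcome_prob eps a w * (D W w * D W' w) / A ^+ 2.
  rewrite estimator_error expr_div_n expr2 big_distrlr mulrA mulr_sumr mulr_suml.
  by apply: eq_bigr => W _; rewrite mulr_sumr mulr_suml.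
rewrite /mse (eq_bigr _ (fun w _ => sq w)) exchange_big mulr_suml /=.
apply: eq_bigr => W _; rewrite exchange_big mulr_suml; apply: eq_bigr => W' _.
by rewrite /noisy_cov /expect mulr_suml.
Qed.

Lemma sum_noisy_cov_le (W : {ffun 'I_k -> 'I_n}) : 0 < eps -> injectiveb W ->
  \sum_(W' : {ffun 'I_k -> 'I_n} | injectiveb W') noisy_cov W W' <=
  (rr_scale eps ^+ #|graphlet_edges g| + 1) ^+ 2 *
  (#|graphlet_edges g| ^ 2 * n ^ (k - 2))%:R.
Proof.
move=> eps_gt0 /injectiveP injW; set c := (_ + 1) ^+ 2.
have c_ge0 : 0 <= c by exact: sqr_ge0.
apply: (@le_trans _ _
  (\sum_W' c * (~~ [disjoint edge_pairs g W & edge_pairs g W'])%:R)).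
  rewrite big_mkcond; apply: ler_sum => W' _; case: ifP => [/injectiveP injW' | _].
    have [disj | _] := boolP [disjoint edge_pairs g W & edge_pairs g W'].
      by rewrite noisy_cov_disjoint ?mulr0 ?lt0r_neq0.
    by rewrite mulr1 noisy_cov_le.
  by rewrite mulr_ge0.
by rewrite -mulr_sumr -natr_sum ler_wpM2l // ler_nat sum_overlaps_le.
Qed.

Lemma mse_le : 0 < eps -> (2 <= k)%N ->
  mse eps g a <= ((rr_scale eps ^+ #|graphlet_edges g| + 1) *
                  #|graphlet_edges g|%:R * n%:R ^+ (k - 1)) ^+ 2.
Proof.
move=> eps_gt0 k_ge2; set m := #|graphlet_edges g|; set h := _ + 1.
have -> : (h * m%:R * n%:R ^+ (k - 1)) ^+ 2 = h ^+ 2 * (m ^ 2 * n ^ (k - 2))%:R *+ n ^ k.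
  rewrite [RHS](_ : _ = h ^+ 2 * (m ^ 2 * n ^ (k - 2) * n ^ k)%:R); last first.
    by rewrite -mulr_natr -mulrA -natrM.
  rewrite -mulnA -expnD (_ : (k - 2 + k = (k - 1) * 2)%N); last lia.
  by rewrite expnM natrM !natrX !exprMn mulrA.
have A2_ge1 : 1 <= A ^+ 2 by rewrite exprn_ege1 // ler1n num_aut_gt0.
rewrite mseE ler_pdivrMr ?exprn_gt0 //.
apply: le_trans (ler_peMr _ A2_ge1); last by rewrite mulrn_wge0 // mulr_ge0 ?sqr_ge0.
apply: (@le_trans _ _ (\sum_(W : {ffun 'I_k -> 'I_n}) h ^+ 2 * (m ^ 2 * n ^ (k - 2))%:R)).
  rewrite big_mkcond; apply: ler_sum => W _; case: ifP => [injW | _].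
    exact: sum_noisy_cov_le.
  by rewrite mulr_ge0 ?sqr_ge0.
by rewrite sumr_const card_ffun !card_ord.
Qed.

End Estimator.

Theorem theorem1 (R : realType) (k : nat) (hk : (2 <= k)%N)
    (g : rel 'I_k) (hg : simple_graph g) (eps : R) (heps : 0 < eps) :
  exists C : R, forall (n : nat) (a : rel 'I_n), simple_graph a ->
    Num.sqrt (mse eps g a) <= C * (n%:R) ^+ (k - 1).
Proof.
set m := #|graphlet_edges g|; exists ((rr_scale eps ^+ m + 1) * m%:R) => n a ha.
have bound_ge0 : 0 <= (rr_scale eps ^+ m + 1) * m%:R * n%:R ^+ (k - 1).
  by rewrite !mulr_ge0 ?addr_ge0 ?exprn_ge0 // (le_trans ler01 (rr_scale_ge1 heps)).
by rewrite -(ger0_norm bound_ge0) -sqrtr_sqr ler_wsqrtr // mse_le.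
Qed.
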